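(* In the toroidal setting below, if $(\lambda_1,\lambda_2)$ is an interior simple zero of $P$, then the map $\hat\phi$ is bounded.
   Context: Toroidal setting: ${\mathcal G}$ is a bipartite graph embedded on a torus with disk faces, admitting dimer covers, nondegenerate, with positive edge weights; $l_1,l_2$ dual cycles generating $H_1$ with $l_1\wedge l_2=+1$; $K(\lambda_1,\lambda_2)$ a real Kasteleyn matrix with entries of edges crossing $l_i$ multiplied by $\lambda_i^{\pm1}$ according to the side of the white vertex; $P=\det K(\lambda_1,\lambda_2)$. An interior simple zero is a simple zero of $P$ with $\lambda_1,\lambda_2$ not both real; there $\ker K$ and $\ker K^t$ are one-dimensional. $\tilde{\mathcal G}$ is the lift to the universal cover with deck translations $p_1,p_2$, $\tilde K$ the lift of $K(1,1)$, $\tilde{\mathcal G}^*$ its dual. $F\in\ker K(\lambda_1,\lambda_2)$, $G\in\ker K(\lambda_1,\lambda_2)^t$ are extended by $F(b+p_j)=\lambda_jF(b)$, $G(w+p_j)=\lambda_j^{-1}G(w)$. $\hat\omega(wb)=\overline{G(w)}\tilde K_{wb}F(b)$ and $\hat\phi$ on vertices of $\tilde{\mathcal G}^*$ is defined up to an additive constant by $\hat\phi(f_1)-\hat\phi(f_2)=\hat\omega(wb)$, $f_1$/$f_2$ the faces to the left/right of the edge oriented from $w$ to $b$. *)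

From HB Require Import structures.
From mathcomp Require Import all_boot all_order all_algebra all_fingroup.
From Stdlib Require Import Relations.
Set Implicit Arguments. Unset Strict Implicit. Unset Printing Implicit Defensive.
Import Order.TTheory GRing.Theory Num.Theory.
Local Open Scope ring_scope.

(* Combinatorial encoding of a bipartite graph embedded on the torus.        *)
(*  - darts : E * bool, (e, true) is e oriented from white to black,         *)
(*            (e, false) is e oriented from black to white                  *)
(*  - sigma : rotation system (counterclockwise cyclic order of the darts    *)
(*            leaving each vertex); it encodes the embedding                 *)
(*  - o1 e, o2 e : signed number of crossings of e with the dual cycles      *)
(*            l1, l2 (sign according to the side of the white vertex), so    *)
(*            that the lift of e joins (wv e, m) to (bv e, m + (o1 e, o2 e)) *)
(*            in the universal cover, whose vertices are vertices x Z^2.     *)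

Definition Z2 := (int * int)%type.
Definition addZ2 (a b : Z2) : Z2 := (a.1 + b.1, a.2 + b.2).
Definition oppZ2 (a : Z2) : Z2 := (- a.1, - a.2).

Section Torus.
Variables (n : nat) (E : finType) (wv bv : E -> 'I_n) (o1 o2 : E -> int).

Definition dart := (E * bool)%type.

(* vertex at the tail of a dart: inl = white, inr = black *)
Definition tail (d : dart) : 'I_n + 'I_n :=
  if d.2 then inl (wv d.1) else inr (bv d.1).

Definition eoff (e : E) : Z2 := (o1 e, o2 e).
Definition doff (d : dart) : Z2 := if d.2 then eoff d.1 else oppZ2 (eoff d.1).

Variable sigma : {perm dart}.

(* next dart along the boundary of the face lying to the left of d *)
Definition fsucc (d : dart) : dart := (sigma^-1)%g (d.1, ~~ d.2).

Definition rotation_system : Prop :=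
  (forall d, tail (sigma d) = tail d) /\
  (forall d d', tail d = tail d' -> fconnect sigma d d').

(* Euler characteristic V - E + F = 0 (genus one) *)
Definition euler_torus : Prop := (n + n + fcard fsucc (@predT dart) = #|E|)%N.

(* face boundaries are null-homologous: the offsets sum to 0 around faces *)
Definition faces_closed : Prop :=
  forall d, \sum_(d' <- fingraph.orbit fsucc d) (doff d').1 = 0 /\
            \sum_(d' <- fingraph.orbit fsucc d) (doff d').2 = 0.

Definition lift_adj (u v : ('I_n + 'I_n) * Z2) : Prop :=
  exists e m, u = (inl (wv e), m) /\ v = (inr (bv e), addZ2 m (eoff e)).

Definition lift_connected : Prop :=
  forall u v, clos_refl_sym_trans _ lift_adj u v.

(* each edge crosses each of the (simple) dual cycles at most once *)
Definition offsets_simple : Prop :=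
  forall e, o1 e \in [:: -1; 0; 1] /\ o2 e \in [:: -1; 0; 1].

Definition dimer_cover (M : {set E}) : Prop :=
  (forall i : 'I_n, #|[set e in M | wv e == i]| = 1%N) /\
  (forall j : 'I_n, #|[set e in M | bv e == j]| = 1%N).

Definition has_dimers_nondegenerate : Prop :=
  (exists M, dimer_cover M) /\ (forall e, exists2 M, dimer_cover M & e \in M).

Variable C : numClosedFieldType.
Variable K : E -> C.   (* entries of the real Kasteleyn matrix K(1,1), per edge *)

(* real Kasteleyn signs with positive (nonzero real) weights: for a face of   *)
(* degree 2k, the alternating product of the edge entries around the face    *)
(* has sign (-1)^(k+1)                                                        *)
Definition kasteleyn : Prop :=
  (forall e, K e \is Num.real /\ K e != 0) /\
  (forall d, 0 < (-1) ^+ ((size (fingraph.orbit fsucc d))./2 + 1) *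
                 \prod_(d' <- fingraph.orbit fsucc d) (if d'.2 then K d'.1 else (K d'.1)^-1)).

Definition lampow (l1 l2 : C) (m : Z2) : C := l1 ^ m.1 * l2 ^ m.2.

(* K(lambda1, lambda2), rows indexed by white vertices, columns by black *)
Definition Kmat (l1 l2 : C) : 'M[C]_n :=
  \matrix_(i, j) \sum_(e | (wv e == i) && (bv e == j)) K e * lampow l1 l2 (eoff e).

Definition P (l1 l2 : C) : C := \det (Kmat l1 l2).

(* z * K(z, l2) and z * K(l1, z) as polynomial matrices (offsets in {-1,0,1}) *)
Definition Kpoly1 (l2 : C) : 'M[{poly C}]_n :=
  \matrix_(i, j) \sum_(e | (wv e == i) && (bv e == j))
     (K e * l2 ^ o2 e) *: 'X^(absz (o1 e + 1)).
Definition Kpoly2 (l1 : C) : 'M[{poly C}]_n :=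
  \matrix_(i, j) \sum_(e | (wv e == i) && (bv e == j))
     (K e * l1 ^ o1 e) *: 'X^(absz (o2 e + 1)).

(* partial derivatives of P(z1,z2) = z1^-n det(Kpoly1 z2)(z1) etc. *)
Definition dP1 (l1 l2 : C) : C :=
  l1 ^- n * ((\det (Kpoly1 l2))^`()).[l1]
  - n%:R * l1 ^- n.+1 * (\det (Kpoly1 l2)).[l1].
Definition dP2 (l1 l2 : C) : C :=
  l2 ^- n * ((\det (Kpoly2 l1))^`()).[l2]
  - n%:R * l2 ^- n.+1 * (\det (Kpoly2 l1)).[l2].

Definition interior_simple_zero (l1 l2 : C) : Prop :=
  [/\ l1 != 0, l2 != 0, P l1 l2 = 0,
      (dP1 l1 l2 != 0) || (dP2 l1 l2 != 0)
    & ~~ ((l1 \is Num.real) && (l2 \is Num.real))].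

(* omega-hat on the lifted edge (e, m): white (wv e, m), black (bv e, m + eoff e), *)
(* with F(b + m) = lambda^m F(b), G(w + m) = lambda^-m G(w)                    *)
Definition omega_hat (l1 l2 : C) (F G : 'cV[C]_n) (e : E) (m : Z2) : C :=
  (lampow l1 l2 (oppZ2 m) * G (wv e) 0)^* * K e
  * (lampow l1 l2 (addZ2 m (eoff e)) * F (bv e) 0).

(* phi-hat, seen as a function on lifted darts (the lifted face to the left  *)
(* of the dart), constant along lifted faces, with the prescribed jumps       *)
Definition is_phi_hat (l1 l2 : C) (F G : 'cV[C]_n) (phi : dart -> Z2 -> C) : Prop :=
  (forall d m, phi (fsucc d) (addZ2 m (doff d)) = phi d m) /\
  (forall e m, phi (e, true) m - phi (e, false) (addZ2 m (eoff e))
               = omega_hat l1 l2 F G e m).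

End Torus.

From HB Require Import structures.
From mathcomp Require Import all_boot all_order all_algebra all_fingroup.
From mathcomp Require Import ring.
From Stdlib Require Import Relations.
Import Order.TTheory GRing.Theory Num.Theory.
Local Open Scope ring_scope.
Set Implicit Arguments. Unset Strict Implicit.

(* Proof idea.  Write nu(s) = conj(lambda^-s) * lambda^s for a translation    *)
(* s of Z^2; since F and G are extended quasi-periodically, the lifted form   *)
(* satisfies omega-hat(e + s) = nu(s) * omega-hat(e), and |nu(s)| = 1.        *)
(* Hence, for a fixed s, the "twisted difference"                             *)
(*        chi_s(f) = phi-hat(f + s) - nu(s) * phi-hat(f)                      *)
(* has zero jump across every lifted edge; it is also constant along faces,   *)
(* so by the rotation system and the connectedness of the lift it is a        *)
(* constant c_s.  Thus phi-hat(f + p_j) = nu_j * phi-hat(f) + c_j, an affine   *)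
(* recursion with unimodular multipliers.  As lambda is not real, nu_1 or     *)
(* nu_2 differs from 1; subtracting the fixed point of that recursion leaves  *)
(* a function whose modulus is invariant under both translations, hence       *)
(* phi-hat is bounded on each of the finitely many dart classes.              *)

Lemma Z2_eq (a b : Z2) : a.1 = b.1 -> a.2 = b.2 -> a = b.
Proof. by case: a b => ? ? [? ?] /= -> ->. Qed.

Definition flip_dart (E : finType) (d : dart E) : dart E := (d.1, ~~ d.2).

Section LiftInvariant.
Variables (n : nat) (E : finType) (wv bv : E -> 'I_n) (o1 o2 : E -> int).
Variables (sigma : {perm dart E}) (T : eqType) (chi : dart E -> Z2 -> T).
Hypothesis rot : rotation_system wv bv sigma.
Hypothesis connected : lift_connected wv bv o1 o2.
Hypothesis face_inv :
  forall d m, chi (fsucc sigma d) (addZ2 m (doff o1 o2 d)) = chi d m.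
Hypothesis edge_inv :
  forall e m, chi (e, true) m = chi (e, false) (addZ2 m (eoff o1 o2 e)).

Lemma chi_flip d m : chi (flip_dart d) (addZ2 m (doff o1 o2 d)) = chi d m.
Proof.
case: d => e [] /=; rewrite /flip_dart /doff /= edge_inv //.
by congr chi; apply: Z2_eq => /=; ring.
Qed.

(* Turning around a vertex does not change chi: sigma d is reached from d by *)
(* flipping sigma d and then following its face.                              *)
Lemma chi_sigma d m : chi (sigma d) m = chi d m.
Proof.
have fsucc_flip : fsucc sigma (flip_dart (sigma d)) = d.
  by rewrite /fsucc /flip_dart /= negbK -surjective_pairing permK.
rewrite -(chi_flip (sigma d) m).
have := face_inv (flip_dart (sigma d)) (addZ2 m (doff o1 o2 (sigma d))).
rewrite fsucc_flip => <-; congr chi; rewrite /doff /flip_dart.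
by case: (sigma d) => e [] /=; apply: Z2_eq => /=; ring.
Qed.

Lemma chi_same_tail d d' m : tail wv bv d = tail wv bv d' -> chi d m = chi d' m.
Proof.
move=> /rot.2; apply: (fconnect_invariant (k := fun d => chi d m)).
by move=> x; rewrite /= chi_sigma eqxx.
Qed.

(* chi only depends on the lifted vertex at the tail, and is preserved along *)
(* lifted edges, hence along any path of the lift.                            *)
Lemma chi_along_path u v :
  clos_refl_sym_trans_1n _ (lift_adj wv bv o1 o2) u v ->
  forall d m d' m', (tail wv bv d, m) = u -> (tail wv bv d', m') = v ->
  chi d m = chi d' m'.
Proof.
elim=> [x|x y z adj _ IH] d m d' m' Hu Hv.
  by rewrite -Hv in Hu; case: Hu => ht <-; apply: chi_same_tail.
case: adj => [[e [k [Ex Ey]]]|[e [k [Ey Ex]]]];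
  rewrite Ex in Hu; subst y; case: Hu => ht ->.
- by rewrite (@chi_same_tail d (e, true)) // edge_inv; apply: IH Hv.
- by rewrite (@chi_same_tail d (e, false)) // -edge_inv; apply: IH Hv.
Qed.

Lemma chi_constant d m d' m' : chi d m = chi d' m'.
Proof.
apply: (@chi_along_path (tail wv bv d, m) (tail wv bv d', m')) => //.
exact/clos_rst_rst1n_iff/connected.
Qed.
End LiftInvariant.

Lemma int_shift_invariant (T : Type) (g : int -> T) :
  (forall k, g (k + 1) = g k) -> forall k, g k = g 0.
Proof.
move=> shift k.
have nonneg (m : nat) : g m%:Z = g 0.
  by elim: m => // m IH; rewrite -IH -(shift m) -PoszD addn1.
have neg (m : nat) : g (- m%:Z) = g 0.
  elim: m => // m IH; rewrite -IH -(shift (- m.+1%:Z)); congr g.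
  by rewrite -addn1 PoszD opprD addrNK.
by case: k => m; [apply: nonneg | rewrite NegzE; apply: neg].
Qed.

(* An affine quasi-periodic function on Z^2 with unimodular multipliers, the  *)
(* first of which is not 1, is bounded: f - c, with c the fixed point of the  *)
(* first recursion, is multiplied by u1 resp. u2 under the two translations   *)
(* (the two recursions commute, which forces c to be a fixed point of the     *)
(* second one too), so its modulus is constant.                               *)
Lemma affine_quasi_periodic_bound (R : numFieldType) (f : int -> int -> R)
    (u1 u2 a b : R) :
  `|u1| = 1 -> `|u2| = 1 -> u1 != 1 ->
  (forall x y, f (x + 1) y = u1 * f x y + a) ->
  (forall x y, f x (y + 1) = u2 * f x y + b) ->
  forall x y, `|f x y| <= `|f 0 0 - a / (1 - u1)| + `|a / (1 - u1)|.
Proof.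
move=> u1_unit u2_unit u1_neq1 rec1 rec2.
have u1_gap : 1 - u1 != 0 by rewrite subr_eq0 eq_sym.
set c := a / (1 - u1).
have a_c : a = c * (1 - u1) by rewrite /c divfK.
have commute : b * (1 - u1) = a * (1 - u2).
  have two_ways : (u2 * (u1 * f 0 0 + a) + b) - (u1 * (u2 * f 0 0 + b) + a) = 0.
    by rewrite -(rec1 0 0) -(rec2 0 0) -(rec2 (0 + 1)) -(rec1 0 (0 + 1)) subrr.
  by apply/eqP; rewrite -subr_eq0 -two_ways; apply/eqP; ring.
have b_c : b = c * (1 - u2) by apply: (mulIf u1_gap); rewrite commute a_c; ring.
pose g x y := f x y - c.
have g1 x y : `|g (x + 1) y| = `|g x y|.
  rewrite /g rec1 a_c.
  have -> : u1 * f x y + c * (1 - u1) - c = u1 * (f x y - c) by ring.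
  by rewrite normrM u1_unit mul1r.
have g2 x y : `|g x (y + 1)| = `|g x y|.
  rewrite /g rec2 b_c.
  have -> : u2 * f x y + c * (1 - u2) - c = u2 * (f x y - c) by ring.
  by rewrite normrM u2_unit mul1r.
move=> x y.
have g_const : `|g x y| = `|g 0 0|.
  rewrite (int_shift_invariant (g := fun x => `|g x y|)) //.
  exact: (int_shift_invariant (g := fun y => `|g 0 y|)).
have -> : f x y = g x y + c by rewrite /g subrK.
by apply: le_trans (ler_normD _ _) _; rewrite g_const.
Qed.

Lemma affine_quasi_periodic_bounded (R : numFieldType) (f : int -> int -> R)
    (u1 u2 a b : R) :
  `|u1| = 1 -> `|u2| = 1 -> (u1 != 1) || (u2 != 1) ->
  (forall x y, f (x + 1) y = u1 * f x y + a) ->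
  (forall x y, f x (y + 1) = u2 * f x y + b) ->
  exists M, forall x y, `|f x y| <= M.
Proof.
move=> u1_unit u2_unit /orP[u1_neq1|u2_neq1] rec1 rec2.
  by eexists; apply: affine_quasi_periodic_bound rec1 rec2.
eexists => x y.
exact: (affine_quasi_periodic_bound (f := fun y x => f x y)
          u2_unit u1_unit u2_neq1 (fun y x => rec2 x y) (fun y x => rec1 x y)).
Qed.

Lemma real_of_unit_conj_ratio (C : numClosedFieldType) (l : C) :
  l != 0 -> (l^-1)^* * l = 1 -> l \is Num.real.
Proof.
move=> l_neq0; rewrite fmorphV => ratio.
have conj_neq0 : l^* != 0 by rewrite conjC_eq0.
by rewrite CrealE; apply/eqP; rewrite -[RHS](mulVKf conj_neq0) ratio mulr1.
Qed.

Section Twist.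
Variables (C : numClosedFieldType) (l1 l2 : C).
Hypotheses (l1_neq0 : l1 != 0) (l2_neq0 : l2 != 0).

Lemma lampowD a b : lampow l1 l2 (addZ2 a b) = lampow l1 l2 a * lampow l1 l2 b.
Proof. by rewrite /lampow /addZ2 /= !expfzDr //; ring. Qed.

Definition twist (s : Z2) : C := (lampow l1 l2 (oppZ2 s))^* * lampow l1 l2 s.

Lemma norm_twist s : `|twist s| = 1.
Proof.
rewrite /twist normrM norm_conjC -normrM -lampowD.
have -> : addZ2 (oppZ2 s) s = (0, 0) by apply: Z2_eq; rewrite /= addNr.
by rewrite /lampow /= mulr1 normr1.
Qed.

Lemma omega_hat_shift n (E : finType) (wv bv : E -> 'I_n) (o1 o2 : E -> int)
    K F G e m s :
  omega_hat wv bv o1 o2 K l1 l2 F G e (addZ2 m s)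
  = twist s * omega_hat wv bv o1 o2 K l1 l2 F G e m.
Proof.
rewrite /omega_hat /twist.
have -> : oppZ2 (addZ2 m s) = addZ2 (oppZ2 m) (oppZ2 s).
  by apply: Z2_eq; rewrite /= opprD.
have -> : addZ2 (addZ2 m s) (eoff o1 o2 e) = addZ2 (addZ2 m (eoff o1 o2 e)) s.
  by apply: Z2_eq => /=; ring.
by rewrite !lampowD !rmorphM /=; ring.
Qed.

Lemma twists_trivial_real :
  twist (1, 0) = 1 -> twist (0, 1) = 1 ->
  (l1 \is Num.real) && (l2 \is Num.real).
Proof.
rewrite /twist /lampow /oppZ2 /= oppr0 !expr0z !mulr1 !mul1r !exprN1 !expr1z.
by move=> /(real_of_unit_conj_ratio l1_neq0) -> /(real_of_unit_conj_ratio l2_neq0).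
Qed.
End Twist.

Lemma twisted_difference_constant n (E : finType) (wv bv : E -> 'I_n)
    (o1 o2 : E -> int) (sigma : {perm dart E}) (C : numClosedFieldType)
    (K : E -> C) (l1 l2 : C) (F G : 'cV[C]_n) (phi : dart E -> Z2 -> C) s :
  l1 != 0 -> l2 != 0 ->
  rotation_system wv bv sigma -> lift_connected wv bv o1 o2 ->
  is_phi_hat wv bv o1 o2 sigma K l1 l2 F G phi ->
  forall d m d' m', phi d (addZ2 m s) - twist l1 l2 s * phi d m
                  = phi d' (addZ2 m' s) - twist l1 l2 s * phi d' m'.
Proof.
move=> l1_neq0 l2_neq0 rot connected [face_const jump].
apply: (chi_constant (chi := fun d m => phi d (addZ2 m s) - twist l1 l2 s * phi d m)
          rot connected) => [d m | e m] /=.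
  have -> : addZ2 (addZ2 m (doff o1 o2 d)) s = addZ2 (addZ2 m s) (doff o1 o2 d).
    by apply: Z2_eq => /=; ring.
  by rewrite !face_const.
have -> : addZ2 (addZ2 m (eoff o1 o2 e)) s = addZ2 (addZ2 m s) (eoff o1 o2 e).
  by apply: Z2_eq => /=; ring.
have := jump e (addZ2 m s); rewrite omega_hat_shift // -jump => /eqP.
rewrite -subr_eq0 => /eqP zero_diff.
by apply/eqP; rewrite -subr_eq0 -zero_diff; apply/eqP; ring.
Qed.

Lemma finite_family_bounded (R : numDomainType) (T : finType) (U : Type)
    (f : T -> U -> R) :
  (forall t, exists M, forall u, `|f t u| <= M) ->
  exists M, forall t u, `|f t u| <= M.
Proof.
move=> /fin_all_exists[M bounded]; exists (\sum_t `|M t|) => t u.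
have M_ge0 : 0 <= M t := le_trans (normr_ge0 _) (bounded t u).
apply: le_trans (bounded t u) _.
by rewrite (bigD1 t) //= ger0_norm // lerDl sumr_ge0.
Qed.

Theorem mainTheorem7
  (n : nat) (E : finType) (wv bv : E -> 'I_n) (o1 o2 : E -> int)
  (sigma : {perm dart E}) (C : numClosedFieldType) (K : E -> C)
  (l1 l2 : C) (F G : 'cV[C]_n) (phi : dart E -> Z2 -> C) :
  rotation_system wv bv sigma ->
  euler_torus n sigma ->
  faces_closed o1 o2 sigma ->
  lift_connected wv bv o1 o2 ->
  offsets_simple o1 o2 ->
  has_dimers_nondegenerate wv bv ->
  kasteleyn sigma K ->
  interior_simple_zero wv bv o1 o2 K l1 l2 ->
  Kmat wv bv o1 o2 K l1 l2 *m F = 0 ->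
  (Kmat wv bv o1 o2 K l1 l2)^T *m G = 0 ->
  is_phi_hat wv bv o1 o2 sigma K l1 l2 F G phi ->
  exists M : C, forall d m, `|phi d m| <= M.
Proof.
move=> rot _ _ connected _ _ _ [l1_neq0 l2_neq0 _ _ not_real] _ _ phi_hat.
pose gap d s := phi d (addZ2 (0, 0) s) - twist l1 l2 s * phi d (0, 0).
have recurrence d s x y :
    phi d (addZ2 (x, y) s) = twist l1 l2 s * phi d (x, y) + gap d s.
  rewrite /gap -(twisted_difference_constant s l1_neq0 l2_neq0 rot connected phi_hat d (x, y)).
  by rewrite addrC subrK.
have some_twist_nontrivial : (twist l1 l2 (1, 0) != 1) || (twist l1 l2 (0, 1) != 1).
  apply: contraNT not_real; rewrite negb_or !negbK => /andP[/eqP t1 /eqP t2].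
  exact: twists_trivial_real.
apply: finite_family_bounded => d.
have [M bounded] : exists M, forall x y, `|phi d (x, y)| <= M.
  apply: (affine_quasi_periodic_bounded (f := fun x y => phi d (x, y))
            (a := gap d (1, 0)) (b := gap d (0, 1)) (norm_twist l1_neq0 l2_neq0 _)
            (norm_twist l1_neq0 l2_neq0 _) some_twist_nontrivial) => x y.
  - by rewrite -recurrence; congr phi; apply: Z2_eq => /=; rewrite ?addr0.
  - by rewrite -recurrence; congr phi; apply: Z2_eq => /=; rewrite ?addr0.
by exists M => -[x y].
Qed.
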